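(* Let $f:X\to Y$ with $X=\mathbb{R}^d$, $Y=\mathbb{R}^{|C|}$ decompose as $f=h\circ\phi$ with $\phi:X\to Z$, $h:Z\to Y$, $Z=\mathbb{R}^{d'}$. Let $r_{map}:Z\to\mathbb{R}^p$ be affine, and for each $con\in Concepts$ let $q_{con}\in\mathbb{R}^p$. Define $rep(con):=\lambda x.\ \cos(r_{map}(\phi(x)),q_{con})$ and $\widehat{rep}(con):=\lambda z.\ \cos(r_{map}(z),q_{con})$. Let $e$ be any $\texttt{Con}_{\texttt{spec}}$ specification and $B\subseteq X$. Then for every $v'\in\phi(B)$ and every $v\in\phi^{-1}(v')=\{v\in X\mid \phi(v)=v'\}$, $$[\![e]\!](h,v',\widehat{rep})=[\![e]\!](f,v,rep).$$
   Context: $C$ is a finite set of class labels and $Concepts$ a finite set of concept names; $\phi(B)=\{\phi(x)\mid x\in B\}$. $\texttt{Con}_{\texttt{spec}}$ expressions are generated by $E::= \texttt{>}(x,con_1,con_2)\mid predict(x,c)\mid \neg E\mid E\wedge E\mid E\vee E$ with $con_1,con_2\in Concepts$, $c\in C$. For $F:W\to\mathbb{R}^{|C|}$, $v\in W$, and $\rho$ assigning to each concept a function $W\to\mathbb{R}$: $[\![\texttt{>}(x,con_1,con_2)]\!](F,v,\rho):=\rho(con_1)(v)>\rho(con_2)(v)$; $[\![predict(x,c)]\!](F,v,\rho):=(\arg\max F(v)=\{c\})$; the connectives $\neg,\wedge,\vee$ are interpreted classically. $\cos(a,b)=\frac{a\cdot b}{\|a\|\|b\|}$. *)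

From mathcomp Require Import all_boot all_order all_algebra.
Set Implicit Arguments. Unset Strict Implicit. Unset Printing Implicit Defensive.
Import Order.TTheory GRing.Theory Num.Theory.
Local Open Scope ring_scope.

(* Con_spec expressions over a type of concept names [Con] and class labels [C].
   The (single) variable x is implicit: it is always the evaluation point v. *)
Inductive conspec (Con C : Type) : Type :=
  | SGt : Con -> Con -> conspec Con C
  | SPredict : C -> conspec Con C
  | SNot : conspec Con C -> conspec Con C
  | SAnd : conspec Con C -> conspec Con C -> conspec Con C
  | SOr : conspec Con C -> conspec Con C -> conspec Con C.

Section Sem.
Variables (R : realDomainType) (Con C : finType) (W : Type).

Definition argmax_set (y : 'rV[R]_#|C|) : {set C} :=
  [set c | [forall c' : C, y 0 (enum_rank c') <= y 0 (enum_rank c)]].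

Fixpoint sem (F : W -> 'rV[R]_#|C|) (v : W) (rho : Con -> W -> R)
    (e : conspec Con C) : bool :=
  match e with
  | SGt c1 c2 => rho c2 v < rho c1 v
  | SPredict c => argmax_set (F v) == [set c]
  | SNot e1 => ~~ sem F v rho e1
  | SAnd e1 e2 => sem F v rho e1 && sem F v rho e2
  | SOr e1 e2 => sem F v rho e1 || sem F v rho e2
  end.
End Sem.

Definition dotv (R : ringType) (n : nat) (a b : 'rV[R]_n) : R := (a *m b^T) 0 0.
Definition normv (R : rcfType) (n : nat) (a : 'rV[R]_n) : R := Num.sqrt (dotv a a).
(* cos(a,b) = a.b / (|a| |b|)  (with MathComp's convention x / 0 = 0) *)
Definition cosv (R : rcfType) (n : nat) (a b : 'rV[R]_n) : R :=
  dotv a b / (normv a * normv b).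

Definition affine (R : ringType) (m p : nat) (g : 'rV[R]_m -> 'rV[R]_p) : Prop :=
  exists (A : 'M[R]_(m, p)) (b : 'rV[R]_p), forall z, g z = z *m A + b.

From mathcomp Require Import all_boot all_order all_algebra.
Import Order.TTheory GRing.Theory Num.Theory.
Local Open Scope ring_scope.

(* A specification is evaluated only through the score vector and the concept
   values at the evaluation point.  Both agree for (h, phi v, rep-hat) and
   (f, v, rep), so the two semantics coincide; neither the affinity of rmap nor
   the set B plays any role. *)

Lemma sem_transfer (R : realDomainType) (Con C : finType) (W W' : Type)
    (F : W -> 'rV[R]_#|C|) (G : W' -> 'rV[R]_#|C|) (v : W) (w : W')
    (rho : Con -> W -> R) (sigma : Con -> W' -> R) :
  F v = G w -> (forall con, rho con v = sigma con w) ->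
  forall e : conspec Con C, sem F v rho e = sem G w sigma e.
Proof.
move=> FG rho_sigma.
elim=> [c1 c2|c|e1 IH|e1 IH1 e2 IH2|e1 IH1 e2 IH2] /=.
- by rewrite !rho_sigma.
- by rewrite FG.
- by rewrite IH.
- by rewrite IH1 IH2.
- by rewrite IH1 IH2.
Qed.

Theorem lemma2 (R : rcfType) (Concepts C : finType) (d d' p : nat)
  (f : 'rV[R]_d -> 'rV[R]_#|C|) (phi : 'rV[R]_d -> 'rV[R]_d')
  (h : 'rV[R]_d' -> 'rV[R]_#|C|)
  (hf : forall x, f x = h (phi x))
  (rmap : 'rV[R]_d' -> 'rV[R]_p) (hr : affine rmap)
  (q : Concepts -> 'rV[R]_p)
  (e : conspec Concepts C) (B : {pred 'rV[R]_d})
  (v' : 'rV[R]_d') (hv' : exists2 b, b \in B & phi b = v')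
  (v : 'rV[R]_d) (hv : phi v = v') :
  sem h v' (fun con z => cosv (rmap z) (q con)) e
  = sem f v (fun con x => cosv (rmap (phi x)) (q con)) e.
Proof.
by apply: sem_transfer => [|con]; rewrite ?hf hv.
Qed.
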